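(* Let $M$ be an $n\times n$ row-stochastic (transition) matrix whose entries can be computed to arbitrary precision locally, distributed so that machine $i$ holds row $i$. Let $k$ be a power of $2$ with $k=O(n^{c_3})$ for a constant $c_3>0$, and let $\beta=\Omega(n^{-c_4})$ for a constant $c_4>0$. Then in the CongestedClique model one can compute, in $\tilde{O}(n^{\alpha})$ rounds, a matrix $\widehat{M}$ (machine $i$ holding row $i$) with $M^k[i,j]-\beta\le \widehat{M}[i,j]\le M^k[i,j]$ for all $i,j$ (subtractive error at most $\beta$).
   Context: The CongestedClique model: $n$ machines with IDs $1,\dots,n$; computation proceeds in synchronous rounds; in each round every machine performs arbitrary local computation and then sends a possibly different message of $O(\log n)$ bits to every other machine; complexity is the number of rounds. $\alpha$ denotes an exponent such that the product of two $n\times n$ matrices with $O(\log n)$-bit entries, machine $i$ holding row $i$ of each, can be computed (machine $i$ ending with row $i$ of the product) in $O(n^\alpha)$ rounds (currently $\alpha\approx 0.158$). $\tilde{O}(f)=O(f\cdot\mathrm{poly}\log n)$. *)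

From Stdlib Require Import Reals.
From HB Require Import structures.
From mathcomp Require Import all_boot all_order all_algebra.
From mathcomp Require Import Rstruct.
Set Implicit Arguments. Unset Strict Implicit. Unset Printing Implicit Defensive.
Import Order.TTheory GRing.Theory Num.Theory.
Local Open Scope ring_scope.

(* Each machine has an arbitrary local state
   (arbitrary local computation), starts from its ID and its local input,
   and in round r sends to every machine j a bit string (which may depend on
   j), then updates its state from the messages it received. *)
Unset Implicit Arguments.
Record CCAlg (n : nat) (I O : Type) : Type := CCA {
  cc_state : Type;
  cc_init : 'I_n -> I -> cc_state;
  (* cc_send r i s j : message sent in round r by machine i (in state s) to j *)
  cc_send : nat -> 'I_n -> cc_state -> 'I_n -> seq bool;
  (* cc_recv r i s m : new state of machine i after round r, m j = msg from j *)
  cc_recv : nat -> 'I_n -> cc_state -> ('I_n -> seq bool) -> cc_state;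
  cc_out : 'I_n -> cc_state -> O }.
Arguments cc_state {n I O}.
Arguments cc_init {n I O}.
Arguments cc_send {n I O}.
Arguments cc_recv {n I O}.
Arguments cc_out {n I O}.
Set Implicit Arguments.

Fixpoint cc_run n I O (A : CCAlg n I O) (inp : 'I_n -> I) (r : nat)
  : 'I_n -> cc_state A :=
  match r with
  | 0%N => fun i => cc_init A i (inp i)
  | r'.+1 => fun i =>
      cc_recv A r' i (@cc_run n I O A inp r' i)
        (fun j => cc_send A r' j (@cc_run n I O A inp r' j) i)
  end.

Definition cc_output n I O (A : CCAlg n I O) (inp : 'I_n -> I) (R : nat)
  (i : 'I_n) : O := cc_out A i (cc_run A inp R i).

Definition cc_bandwidth n I O (A : CCAlg n I O) (B : nat) : Prop :=
  forall r i s j, (size (cc_send A r i s j) <= B)%N.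

Definition logbits (n : nat) : nat := (trunc_log 2 n).+1.

(* ---------- alpha: matrix-multiplication exponent ----------
   For every constant c, there is an O(log n)-bandwidth CongestedClique
   algorithm which, machine i holding row i of X and Y (integer matrices
   with entries of absolute value <= n^c, i.e. O(log n) bits), ends with
   machine i holding row i of X *m Y, in O(n^alpha) rounds. *)
Definition MatMulExponent (alpha : R) : Prop :=
  forall c : nat, exists (b : nat) (K : R) (N0 : nat) (Rnd : nat -> nat)
    (A : forall n : nat, CCAlg n (('I_n -> int) * ('I_n -> int)) ('I_n -> int)),
    forall n : nat, (N0 <= n)%N ->
      cc_bandwidth (A n) (b * logbits n) /\
      (Rnd n)%:R <= K * Rpower n%:R alpha /\
      forall X Y : 'M[int]_n,
        (forall i j, (`|X i j| <= n ^ c)%N) ->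
        (forall i j, (`|Y i j| <= n ^ c)%N) ->
        forall i : 'I_n,
          cc_output (A n) (fun i0 => (fun j => X i0 j, fun j => Y i0 j)) (Rnd n) i
          = (fun j => (X *m Y) i j).

Definition row_stochastic n (M : 'M[R]_n) : Prop :=
  (forall i j, 0 <= M i j) /\ (forall i, \sum_(j < n) M i j = 1).

From Stdlib Require Import Reals FunctionalExtensionality.
From HB Require Import structures.
From mathcomp Require Import all_boot all_order all_algebra.
From mathcomp Require Import Rstruct zify ring lra.
Set Implicit Arguments. Unset Strict Implicit. Unset Printing Implicit Defensive.
Import Order.TTheory GRing.Theory Num.Theory.
Local Open Scope ring_scope.

(* Fixed-point repeated squaring.  With P = n ^ c0 and the rounding
   r x = floor (x P) / P, compute B_0 = r M and B_(t+1) = r (B_t B_t): each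
   P B_t is an integer matrix with entries in [0, P], so a step is one integer
   matrix product followed by a local division by P.  Rounding down keeps
   0 <= B_t <= M ^ (2 ^ t); since M ^ (2 ^ t) is stochastic, the row sums of
   M ^ (2 ^ t) - B_t at most double and grow by n / P at each squaring.  After
   log k squarings the error is below 2 k n / P <= beta once c0 >= c3 + c4 + 2,
   and the log k = O (log n) products take O (n ^ alpha) rounds each. *)

Definition stochastic_mx (F : numDomainType) n (M : 'M[F]_n) : Prop :=
  (forall i j, 0 <= M i j) /\ (forall i, \sum_(j < n) M i j = 1).

Lemma rowsum_mulmx (F : pzSemiRingType) m n p (X : 'M[F]_(m, n)) (Y : 'M[F]_(n, p)) i :
  \sum_(j < p) (X *m Y) i j = \sum_(l < n) X i l * \sum_(j < p) Y l j.
Proof.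
under eq_bigr do rewrite mxE.
by rewrite exchange_big; apply: eq_bigr => l _; rewrite mulr_sumr.
Qed.

Lemma mx_exp2S (F : pzRingType) n (M : 'M[F]_n) t :
  M ^+ (2 ^ t.+1) = M ^+ (2 ^ t) *m M ^+ (2 ^ t).
Proof. by rewrite expnS mulnC exprM expr2 mulmxE. Qed.

Section Stochastic.
Variables (F : numDomainType) (n : nat).
Implicit Types M N B : 'M[F]_n.

Lemma stochastic_mx_le1 M : stochastic_mx M -> forall i j, M i j <= 1.
Proof.
move=> [M_ge0 M_sum] i j; rewrite -(M_sum i) (bigD1 j) //= lerDl.
by apply: sumr_ge0 => l _.
Qed.

Lemma stochastic_mulmx M N :
  stochastic_mx M -> stochastic_mx N -> stochastic_mx (M *m N).
Proof.
move=> [M_ge0 M_sum] [N_ge0 N_sum]; split=> [i j | i].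
  by rewrite mxE; apply: sumr_ge0 => l _; apply: mulr_ge0.
rewrite rowsum_mulmx -(M_sum i); apply: eq_bigr => l _.
by rewrite N_sum mulr1.
Qed.

Lemma stochastic_exp2 M t : stochastic_mx M -> stochastic_mx (M ^+ (2 ^ t)).
Proof.
move=> M_stoch; elim: t => [|t IH]; first by rewrite expr1.
by rewrite mx_exp2S; apply: stochastic_mulmx.
Qed.

(* [N N - B B = (N - B) N + B (N - B)], with [N] stochastic and [B]
   substochastic. *)
Lemma rowsum_deficit_mulmx N B e :
  stochastic_mx N -> (forall i j, 0 <= B i j <= N i j) ->
  (forall i, \sum_(j < n) (N i j - B i j) <= e) ->
  forall i, \sum_(j < n) ((N *m N) i j - (B *m B) i j) <= e + e.
Proof.
move=> N_stoch B_bounds deficit_le i.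
have [N_ge0 N_sum] := N_stoch.
have B_ge0 l j : 0 <= B l j by have /andP[] := B_bounds l j.
have B_sum l : \sum_(j < n) B l j <= 1.
  by rewrite -(N_sum l); apply: ler_sum => j _; have /andP[] := B_bounds l j.
have e_ge0 : 0 <= e.
  apply: le_trans (deficit_le i); apply: sumr_ge0 => j _.
  by rewrite subr_ge0; have /andP[] := B_bounds i j.
rewrite sumrB !rowsum_mulmx -sumrB.
rewrite (eq_bigr (fun l => (N i l - B i l) * \sum_(j < n) N l j
                          + B i l * \sum_(j < n) (N l j - B l j))); last first.
  by move=> l _; rewrite sumrB; ring.
rewrite big_split /=; apply: lerD.
  by under eq_bigr do rewrite N_sum mulr1; apply: deficit_le.
apply: le_trans (_ : \sum_(l < n) B i l * e <= e).
  by apply: ler_sum => l _; apply: ler_wpM2l.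
by rewrite -mulr_suml; apply: ler_piMl.
Qed.

End Stochastic.

Section RoundedSquaring.
Variables (F : numDomainType) (n : nat) (r : F -> F) (eps : F).
Hypothesis r_ge0 : forall x, 0 <= x -> 0 <= r x.
Hypothesis r_bounds : forall x, x - eps <= r x <= x.

Fixpoint rounded_pow2 (M : 'M[F]_n) t : 'M[F]_n :=
  if t is t'.+1 then map_mx r (rounded_pow2 M t' *m rounded_pow2 M t')
  else map_mx r M.

Variable M : 'M[F]_n.
Hypothesis M_stoch : stochastic_mx M.

Lemma rounded_pow2_bounds t i j :
  0 <= rounded_pow2 M t i j <= (M ^+ (2 ^ t)) i j.
Proof.
elim: t i j => [|t IH] i j /=; rewrite mxE.
  by have [M_ge0 _] := M_stoch; rewrite expr1 r_ge0 //; have /andP[] := r_bounds (M i j).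
have /andP[_ r_le] := r_bounds ((rounded_pow2 M t *m rounded_pow2 M t) i j).
rewrite r_ge0 /=; last by rewrite mxE; apply: sumr_ge0 => l _; apply: mulr_ge0;
  have /andP[] := IH i l; have /andP[] := IH l j.
apply: le_trans r_le _; rewrite mx_exp2S !mxE; apply: ler_sum => l _.
by have /andP[? ?] := IH i l; have /andP[? ?] := IH l j; apply: ler_pM.
Qed.

Lemma rounded_pow2_deficit t i :
  \sum_(j < n) ((M ^+ (2 ^ t)) i j - rounded_pow2 M t i j)
    <= (2 ^+ t.+1 - 1) * (n%:R * eps).
Proof.
have rounding_loss (X : 'M[F]_n) k :
    \sum_(j < n) (X k j - map_mx r X k j) <= n%:R * eps.
  apply: (@le_trans _ _ (\sum_(j < n) eps)).
    by apply: ler_sum => j _; rewrite mxE lerBlDr -lerBlDl; have /andP[] := r_bounds (X k j).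
  by rewrite sumr_const card_ord mulr_natl.
elim: t i => [|t IH] i.
  by rewrite /= expr1 (_ : 2 ^+ 1 - 1 = 1 :> F) ?mul1r ?rounding_loss // expr1; ring.
set B := rounded_pow2 M t; set N := M ^+ (2 ^ t).
have deficit_sq := rowsum_deficit_mulmx (stochastic_exp2 t M_stoch)
  (rounded_pow2_bounds t) IH i.
rewrite mx_exp2S -/N /= -/B.
rewrite (eq_bigr (fun j => ((N *m N) i j - (B *m B) i j)
                         + ((B *m B) i j - map_mx r (B *m B) i j))); last first.
  by move=> j _; rewrite addrA subrK.
rewrite big_split /=; apply: le_trans (lerD deficit_sq (rounding_loss _ i)) _.
by rewrite !exprS le_eqVlt; apply/orP; left; apply/eqP; ring.
Qed.

Lemma rounded_pow2_approx t i j :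
  (M ^+ (2 ^ t)) i j - (2 ^+ t.+1 - 1) * (n%:R * eps) <= rounded_pow2 M t i j
    <= (M ^+ (2 ^ t)) i j.
Proof.
have /andP[B_ge0 B_le] := rounded_pow2_bounds t i j; rewrite B_le andbT.
rewrite lerBlDr -lerBlDl; apply: le_trans (rounded_pow2_deficit t i).
rewrite (bigD1 j) //= lerDl; apply: sumr_ge0 => l _.
by rewrite subr_ge0; have /andP[] := rounded_pow2_bounds t i l.
Qed.

End RoundedSquaring.

Section FixedPoint.
Variables (F : archiRealFieldType) (P : nat).
Hypothesis P_gt0 : (0 < P)%N.

Let P_gt0F : 0 < P%:R :> F. Proof. by rewrite ltr0n. Qed.

Definition round_down (x : F) : F := (Num.floor (x * P%:R))%:~R / P%:R.

Lemma round_down_ge0 x : 0 <= x -> 0 <= round_down x.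
Proof.
by move=> x_ge0; rewrite divr_ge0 ?ler0z ?floor_ge0 ?mulr_ge0 // ltW.
Qed.

Lemma round_down_bounds x : x - P%:R^-1 <= round_down x <= x.
Proof.
rewrite ler_pdivrMr // floor_le andbT ler_pdivlMr // mulrBl mulVf ?gt_eqF //.
by rewrite lerBlDr ltW // -[1]/(1%:~R) -rmorphD floorD1_gt.
Qed.

Lemma floor_intr_div (S : int) : Num.floor (S%:~R / P%:R : F) = (S %/ P%:Z)%Z.
Proof.
have Pz : 0 < P%:Z by rewrite ltz_nat.
apply: floor_def; rewrite ler_pdivlMr // ltr_pdivrMr //.
rewrite -[P%:R]/(P%:Z%:~R) -!rmorphM /= ler_int ltr_int.
by rewrite lez_floor ?gt_eqF //= ltz_ceil.
Qed.

Variable n : nat.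

Fixpoint fixed_pow2 (M : 'M[F]_n) t : 'M[int]_n :=
  if t is t'.+1 then
    \matrix_(i, j) (((fixed_pow2 M t' *m fixed_pow2 M t') i j) %/ P%:Z)%Z
  else \matrix_(i, j) Num.floor (M i j * P%:R).

Lemma fixed_pow2E M t :
  map_mx (fun a => a%:~R / P%:R) (fixed_pow2 M t) = rounded_pow2 round_down M t.
Proof.
elim: t => [|t IH] /=; apply/matrixP => i j; rewrite !mxE // -IH.
rewrite /round_down -floor_intr_div; congr ((Num.floor _)%:~R / _).
rewrite rmorph_sum !mulr_suml; apply: eq_bigr => l _.
by rewrite !mxE rmorphM /=; field; rewrite gt_eqF.
Qed.

Lemma fixed_pow2_le M t i j : stochastic_mx M -> (`|fixed_pow2 M t i j| <= P)%N.
Proof.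
move=> M_stoch.
have := rounded_pow2_bounds round_down_ge0 round_down_bounds M_stoch t i j.
rewrite -fixed_pow2E mxE => /andP[X_ge0 X_le].
have X_le1 := le_trans X_le (stochastic_mx_le1 (stochastic_exp2 t M_stoch) i j).
rewrite pmulr_lge0 ?invr_gt0 // ler0z in X_ge0.
rewrite ler_pdivrMr // mul1r -[P%:R]/(P%:Z%:~R) ler_int in X_le1.
move: X_ge0 X_le1; set a := fixed_pow2 M t i j; lia.
Qed.

End FixedPoint.

Section PhaseIteration.
Local Open Scope nat_scope.
Variables (n : nat) (I J V O : Type) (B : CCAlg n J V) (Rr : nat).
Variables (init : 'I_n -> I -> V) (enc : 'I_n -> V -> J).
Variables (step : 'I_n -> V -> V) (out : 'I_n -> V -> O).

(* Round [r] is round [r %% Rr] of a phase of [B]; machine [i] keeps a value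
   [v], starts each phase on input [enc i v] and sets [v] to [step i] of its
   output when the phase ends. *)
Definition cc_iterate : CCAlg n I O :=
  @CCA n I O (V * cc_state B)
    (fun i x => let v := init i x in (v, cc_init B i (enc i v)))
    (fun r i s => cc_send B (r %% Rr) i s.2)
    (fun r i s m =>
       let s' := cc_recv B (r %% Rr) i s.2 m in
       if (r %% Rr).+1 == Rr then
         let v := step i (cc_out B i s') in (v, cc_init B i (enc i v))
       else (s.1, s'))
    (fun i s => out i s.1).

Fixpoint phase_value (inp : 'I_n -> I) t : 'I_n -> V :=
  if t is t'.+1 then
    fun i => step i (cc_output B (fun i0 => enc i0 (phase_value inp t' i0)) Rr i)
  else fun i => init i (inp i).

Hypothesis Rr_gt0 : 0 < Rr.

Lemma cc_iterate_run inp N i :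
  cc_run cc_iterate inp N i =
    (phase_value inp (N %/ Rr) i,
     cc_run B (fun i0 => enc i0 (phase_value inp (N %/ Rr) i0)) (N %% Rr) i).
Proof.
elim: N i => [|N IH] i; first by rewrite div0n mod0n.
rewrite [cc_run _ _ N.+1]/= (functional_extensionality _ _ IH) /=.
set w := fun i0 => enc i0 (phase_value inp (N %/ Rr) i0).
have N_mod_lt : N %% Rr < Rr by rewrite ltn_mod.
rewrite modnS divnS //; case: (boolP (Rr %| N.+1)) => [dvd_N1 | ndvd_N1].
  have phase_end : (N %% Rr).+1 = Rr.
    have : (N %% Rr).+1 %% Rr = 0 by rewrite -addn1 modnDml addn1; apply/eqP.
    by move: N_mod_lt; rewrite leq_eqVlt => /orP[/eqP // | lt_Rr]; rewrite modn_small.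
  rewrite phase_end eqxx add1n -/(cc_run B w (N %% Rr).+1 i).
  by rewrite phase_end.
have -> : ((N %% Rr).+1 == Rr) = false.
  apply: contraNF ndvd_N1 => /eqP phase_end.
  by rewrite /dvdn -addn1 -modnDml addn1 phase_end modnn.
by rewrite add0n.
Qed.

Lemma cc_iterate_output inp t i :
  cc_output cc_iterate inp (t * Rr) i = out i (phase_value inp t i).
Proof. by rewrite /cc_output cc_iterate_run mulnK. Qed.

End PhaseIteration.

Lemma cc_iterate_bandwidth n I J V O (B : CCAlg n J V) Rr init enc step
  (out : 'I_n -> V -> O) (b : nat) :
  cc_bandwidth B b -> cc_bandwidth (@cc_iterate n I J V O B Rr init enc step out) b.
Proof. by move=> B_bw r i s j; apply: B_bw. Qed.

Definition cc_computes_mulmx n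
    (A : CCAlg n (('I_n -> int) * ('I_n -> int)) ('I_n -> int)) (Rr P : nat) : Prop :=
  forall X Y : 'M[int]_n,
    (forall i j, (`|X i j| <= P)%N) -> (forall i j, (`|Y i j| <= P)%N) ->
    forall i, cc_output A (fun i0 => (fun j => X i0 j, fun j => Y i0 j)) Rr i
              = (fun j => (X *m Y) i j).

(* With no communication, row [i] of [X *m Y] would depend on rows [i] of [X]
   and [Y] only. *)
Lemma cc_computes_mulmx_rounds_gt0 n A Rr P :
  (1 < n)%N -> (0 < P)%N -> @cc_computes_mulmx n A Rr P -> (0 < Rr)%N.
Proof.
move=> n_gt1 P_gt0 A_mul; rewrite lt0n; apply/eqP => Rr0; subst Rr.
pose i0 : 'I_n := Ordinal (ltnW n_gt1); pose i1 : 'I_n := Ordinal n_gt1.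
pose X : 'M[int]_n := \matrix_(i, j) ((i == i0) && (j == i1))%:R.
pose Y : 'M[int]_n := \matrix_(i, j) ((i == i1) && (j == i0))%:R.
have X_le i j : (`|X i j| <= P)%N by rewrite mxE; case: (_ && _).
have Y_le i j : (`|Y i j| <= P)%N by rewrite mxE; case: (_ && _).
have zero_le i j : (`|(0%R : 'M[int]_n) i j| <= P)%N by rewrite mxE.
have same_input : (fun j => (0%R : 'M[int]_n) i0 j) = (fun j => Y i0 j).
  by apply: functional_extensionality => j; rewrite !mxE.
have : (X *m 0) i0 i0 = (X *m Y) i0 i0.
  have := congr1 (fun f => f i0) (A_mul X 0 X_le zero_le i0).
  have := congr1 (fun f => f i0) (A_mul X Y X_le Y_le i0).
  by rewrite /cc_output /= same_input => <- <-.
rewrite mulmx0 /X /Y !mxE (bigD1 i1) //= !mxE !eqxx big1 ?addr0 //.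
by move=> l /negbTE l_neq; rewrite !mxE l_neq andbF mul0r.
Qed.

Definition cc_power_approx {F : archiRealFieldType} n
    (A : CCAlg n (('I_n -> int) * ('I_n -> int)) ('I_n -> int)) (Rr P : nat)
    : CCAlg n ('I_n -> F) ('I_n -> F) :=
  cc_iterate A Rr (fun _ row j => Num.floor (row j * P%:R)) (fun _ v => (v, v))
    (fun _ w j => (w j %/ P%:Z)%Z) (fun _ v j => (v j)%:~R / P%:R).

Lemma cc_power_approx_output (F : archiRealFieldType) n A Rr P (M : 'M[F]_n) t i j :
  cc_computes_mulmx A Rr P -> (0 < Rr)%N -> (0 < P)%N -> stochastic_mx M ->
  cc_output (cc_power_approx A Rr P) (fun i0 j0 => M i0 j0) (t * Rr) i j
    = rounded_pow2 (round_down P) M t i j.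
Proof.
move=> A_mul Rr_gt0 P_gt0 M_stoch.
have phase_valueE : forall t, phase_value A Rr (fun _ row j => Num.floor (row j * P%:R))
    (fun _ v => (v, v)) (fun _ w j => (w j %/ P%:Z)%Z) (fun i0 j0 => M i0 j0) t
    = fun i j => fixed_pow2 P M t i j.
  elim=> [|s IH]; apply: functional_extensionality => i0;
    apply: functional_extensionality => j0; rewrite /= ?mxE //.
  by rewrite IH A_mul ?mxE // => *; apply: fixed_pow2_le.
by rewrite cc_iterate_output // phase_valueE -fixed_pow2E // mxE.
Qed.

Lemma ln_le_ln (x y : R) : 0 < x -> x <= y -> ln x <= ln y.
Proof.
move=> /RltP x_gt0; rewrite le_eqVlt => /predU1P[-> // | /RltP lt_xy].
exact/ltW/RltP/ln_increasing.
Qed.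

Lemma Rpower_gt0 (x y : R) : 0 < Rpower x y.
Proof. exact/RltP/exp_pos. Qed.

Lemma ln2_gt0 : 0 < ln 2 :> R.
Proof.
apply/RltP; apply: Rlt_trans ln_lt_2; apply: Rinv_0_lt_compat; exact: Rlt_0_2.
Qed.

Lemma le_log2 (T : nat) (C c x : R) :
  exp 1 <= x -> 0 < c -> (2 ^ T)%:R <= C * Rpower x c ->
  T%:R <= (`|ln C| + c) / ln 2 * ln x.
Proof.
move=> x_ge_e c_gt0 pow_le.
have x_gt0 : 0 < x by apply: lt_le_trans x_ge_e; exact/RltP/exp_pos.
have ln_x_ge1 : 1 <= ln x by rewrite -[X in X <= _](ln_exp 1) ln_le_ln //; exact/RltP/exp_pos.
have C_gt0 : 0 < C.
  rewrite -(pmulr_lgt0 _ (Rpower_gt0 x c)); apply: lt_le_trans pow_le.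
  by rewrite ltr0n expn_gt0.
have log_le : T%:R * ln 2 <= ln C + c * ln x.
  have ln_pow2 : ln (2 ^ T)%:R = T%:R * ln 2.
    by rewrite natrX -RpowE ln_pow -?INRE //; apply: Rlt_0_2.
  have ln_bound : ln (C * Rpower x c) = ln C + c * ln x.
    by rewrite -[RHS]/(Rplus (ln C) (Rmult c (ln x))) -ln_Rpower -ln_mult //;
      apply/RltP; rewrite ?Rpower_gt0.
  by rewrite -ln_pow2 -ln_bound ln_le_ln // ltr0n expn_gt0.
have abs_le : `|ln C| <= `|ln C| * ln x by rewrite ler_peMr.
rewrite mulrAC ler_pdivlMr ?ln2_gt0 //.
by move: (ler_norm (ln C)); lra.
Qed.

Lemma rounds_le (T Rm : nat) (C K c alpha x : R) :
  exp 1 <= x -> 0 < c -> Rm%:R <= K * Rpower x alpha ->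
  (2 ^ T)%:R <= C * Rpower x c ->
  (T * Rm)%:R <= (`|ln C| + c) / ln 2 * K * Rpower x alpha * ln x.
Proof.
move=> x_ge_e c_gt0 Rm_le pow_le; rewrite natrM.
rewrite (_ : _ * _ * _ * _ = (`|ln C| + c) / ln 2 * ln x * (K * Rpower x alpha));
  last by ring.
by apply: ler_pM => //; apply: le_log2.
Qed.

Lemma pow2_error_le (c3 c4 C C' beta : R) (T c0 n : nat) :
  (0 < n)%N -> 0 < C' -> c3 + c4 + 2 <= c0%:R -> 2 * C <= C' * n%:R ->
  (2 ^ T)%:R <= C * Rpower n%:R c3 -> C' * Rpower n%:R (- c4) <= beta ->
  (2 ^+ T.+1 - 1) * (n%:R / (n ^ c0)%:R) <= beta.
Proof.
move=> n_gt0 C'_gt0 c0_ge C_le pow_le beta_ge.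
set x : R := n%:R; set p := Rpower x c3; set q := Rpower x c4.
have {}C_le : 2 * C <= C' * x := C_le.
have x_gt0 : 0 < x by rewrite ltr0n.
have [p_gt0 q_gt0] : 0 < p /\ 0 < q by rewrite !Rpower_gt0.
have pow2S_le : (2 ^ T.+1)%:R <= 2 * C * p by rewrite expnS natrM -mulrA ler_wpM2l.
have pow_ge : p * q * x * x <= (n ^ c0)%:R.
  have -> : (n ^ c0)%:R = Rpower x c0%:R.
    by rewrite -(INRE c0) Rpower_pow ?RpowE -?natrX //; exact/RltP.
  have -> : p * q * x * x = Rpower x (c3 + c4 + 2).
    by rewrite /p /q !Rpower_plus !Rpower_1 ?RmultE; [ring | exact/RltP].
  have := Rle_Rpower x (c3 + c4 + 2) c0%:R; move=> /(_ _ _)/RleP; apply; last exact/RleP.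
  by apply/RleP; rewrite ler1n.
apply: le_trans (_ : (2 ^ T.+1)%:R * (x / (n ^ c0)%:R) <= _).
  by rewrite ler_wpM2r ?divr_ge0 // natrX lerBlDr lerDl.
apply: le_trans beta_ge; rewrite Rpower_Ropp -/x -/q.
rewrite mulrA ler_pdivrMr; last by rewrite ltr0n expn_gt0 n_gt0.
apply: le_trans (_ : C' / q * (p * q * x * x) <= _); last first.
  by apply: ler_wpM2l pow_ge; rewrite divr_ge0 ?ltW.
rewrite (_ : C' / q * _ = C' * x * (p * x)); last by field; rewrite gt_eqF.
apply: le_trans (_ : 2 * C * (p * x) <= _); first by rewrite mulrA ler_pM2r.
by rewrite ler_pM2r ?mulr_gt0.
Qed.

Lemma exp1_le_nat n : (3 <= n)%N -> exp 1 <= n%:R :> R.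
Proof.
move=> n_ge3; rewrite -INRE INR_IZR_INZ; apply/RleP.
by apply: Rle_trans exp_le_3 (IZR_le _ _ _); lia.
Qed.

Theorem mainTheorem8 (alpha c3 c4 : R) (k : nat -> nat) (beta : nat -> R) :
  MatMulExponent alpha ->
  0 < c3 -> 0 < c4 ->
  (forall n, exists e : nat, k n = (2 ^ e)%N) ->
  (exists (C : R) (N : nat), forall n, (N <= n)%N ->
      (k n)%:R <= C * Rpower n%:R c3) ->
  (exists (C : R) (N : nat), 0 < C /\ forall n, (N <= n)%N ->
      C * Rpower n%:R (- c4) <= beta n) ->
  exists (b : nat) (K : R) (d : nat) (N0 : nat) (Rnd : nat -> nat)
    (A : forall n : nat, CCAlg n ('I_n -> R) ('I_n -> R)),
    forall n : nat, (N0 <= n)%N ->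
      cc_bandwidth (A n) (b * logbits n) /\
      (Rnd n)%:R <= K * Rpower n%:R alpha * (ln n%:R) ^+ d /\
      forall M : 'M[R]_n, row_stochastic M ->
        forall i j : 'I_n,
          (M ^+ k n) i j - beta n
            <= cc_output (A n) (fun i0 => fun j0 => M i0 j0) (Rnd n) i j
            <= (M ^+ k n) i j.
Proof.
move=> mm c3_gt0 c4_gt0 k_pow2 [C1 [N1 k_le]] [C2 [N2 [C2_gt0 beta_ge]]].
pose c0 := (Num.truncn (c3 + c4 + 2)).+1; pose Nc := (Num.truncn (2 * C1 / C2)).+1.
have [b [K [Nmm [Rm [A mm_spec]]]]] := mm c0.
pose T n := trunc_log 2 (k n).
exists b, ((`|ln C1| + c3) / ln 2 * K), 1%N, (maxn (maxn 3 Nmm) (maxn (maxn N1 N2) Nc)),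
  (fun n => T n * Rm n)%N, (fun n => cc_power_approx (A n) (Rm n) (n ^ c0)).
move=> n; rewrite !geq_max => /andP[/andP[n_ge3 n_geNmm] /andP[/andP[n_geN1 n_geN2] n_geNc]].
have [A_bw [Rm_le A_mul]] := mm_spec n n_geNmm.
have kE : k n = (2 ^ T n)%N by rewrite /T; have [e ->] := k_pow2 n; rewrite trunc_expnK.
have P_gt0 : (0 < n ^ c0)%N by rewrite expn_gt0 (leq_trans _ n_ge3).
have Rm_gt0 : (0 < Rm n)%N.
  by apply: cc_computes_mulmx_rounds_gt0 A_mul => //; apply: leq_trans n_ge3.
split; first exact: cc_iterate_bandwidth.
split.
  rewrite expr1; apply: rounds_le => //; first exact: exp1_le_nat.
  by rewrite -kE; apply: k_le.
move=> M M_stoch i j; rewrite cc_power_approx_output // kE.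
have /andP[lo hi] := rounded_pow2_approx (round_down_ge0 (n ^ c0)) (round_down_bounds P_gt0) M_stoch (T n) i j.
rewrite hi andbT (le_trans _ lo) // lerB //.
apply: (pow2_error_le (C := C1) _ C2_gt0 _ _ _ (beta_ge n n_geN2)).
- exact: leq_trans n_ge3.
- exact/ltW/truncnS_gt.
- rewrite -ler_pdivrMl // mulrC; apply: le_trans (ltW (truncnS_gt _)) _.
  by rewrite ler_nat.
- by rewrite -kE k_le.
Qed.
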